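(* Fix $\beta>1$. There exist $\varepsilon>0$ and $\delta>0$ such that for every power series of the form $g(x)=1+\sum_{k=1}^\infty(a_k-b_k)x^k$ with $(a_1,a_2,\ldots)\in S_\beta^+$ and $(b_1,b_2,\ldots)\in S_\beta^+$, and every $x\in[0,1/\beta+\varepsilon]$, if $|g(x)|<\delta$ then $g'(x)<-\delta$.
   Context: For $\beta>1$ let $f_\beta\colon[0,1]\to[0,1)$, $f_\beta(x)=\beta x\bmod 1$, and for $x\in[0,1]$ let $d(x,\beta)=(d_k(x,\beta))_{k\ge1}$ with $d_k(x,\beta)=\lfloor\beta f_\beta^{k-1}(x)\rfloor$. $S_\beta^+$ denotes the closure, in the product topology on $\{0,1,\ldots,\lfloor\beta\rfloor\}^{\mathbb N}$, of $\{d(x,\beta):x\in[0,1)\}$. *)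

From Stdlib Require Import Reals Lra Lia ZArith.
From Coquelicot Require Import Coquelicot.
Open Scope R_scope.

Definition fbeta (beta x : R) : R := beta * x - IZR (Int_part (beta * x)).

(* d_{k+1}(x,beta) = floor(beta * f_beta^k(x)); sequences indexed from 0,
   so index k here corresponds to the paper's index k+1. *)
Definition digit (beta x : R) (k : nat) : nat :=
  Z.to_nat (Int_part (beta * Nat.iter k (fbeta beta) x)).

(* S_beta^+ : closure in the product topology of {d(x,beta) : x in [0,1)}.
   A basic neighbourhood of s is a cylinder (first N digits fixed), so s is in
   the closure iff every cylinder around s contains some d(x,beta). *)
Definition S_plus (beta : R) (s : nat -> nat) : Prop :=
  (forall k, (s k <= Z.to_nat (Int_part beta))%nat) /\
  forall N : nat, exists x, 0 <= x < 1 /\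
    forall k, (k < N)%nat -> s k = digit beta x k.

(* g(y) = 1 + sum_{k>=1} (a_k - b_k) y^k, with a_k = a (k-1). *)
Definition gser (a b : nat -> nat) (y : R) : R :=
  1 + Series (fun k => (INR (a k) - INR (b k)) * y ^ (S k)).

From Stdlib Require Import Reals Lra Lia ZArith.
From Coquelicot Require Import Coquelicot.
Open Scope R_scope.

(* Write g = 1 + A - B, where A and B are the power series with coefficient
   sequences a and b.  As b is a limit of greedy beta-expansions of points of
   [0, 1), B(1/beta) <= 1, and B is uniformly Lipschitz on [0, r] for
   r = (1 + 1/beta) / 2, so B(x) <= 1 + eta/2 for x <= 1/beta + eps.  If
   |g(x)| < delta, then A(x) < eta and B(x) > 3/4.  The latter keeps x above
   some m > 0, so A(x) < eta = m^(N+1) forces the first N coefficients of a to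
   vanish, and then A'(x) < 1/4 for N large, whereas B'(x) >= B(x) > 3/4.
   Hence g'(x) < -1/2. *)

Lemma Rinv_lt_1 (x : R) : 1 < x -> 0 < / x < 1.
Proof. intros Hx. split; [apply Rinv_0_lt_compat|rewrite <- Rinv_1; apply Rinv_lt_contravar]; lra. Qed.

Lemma ex_mul_pow_lt (c q e : R) : 0 < c -> 0 <= q < 1 -> 0 < e -> exists N, c * q ^ N < e.
Proof.
  intros Hc Hq He.
  destruct (pow_lt_1_zero q ltac:(rewrite Rabs_pos_eq; lra) (e / c)) as [N HN];
    [apply Rdiv_lt_0_compat; lra|].
  exists N. specialize (HN N (Nat.le_refl N)).
  rewrite Rabs_pos_eq in HN by (apply pow_le; lra).
  apply (Rmult_lt_compat_l c) in HN; [|exact Hc].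
  replace (c * (e / c)) with e in HN by (field; lra). exact HN.
Qed.

Lemma Series_le_geom (u : nat -> R) (K q : R) :
  0 <= q < 1 -> (forall k, 0 <= u k <= K * q ^ k) ->
  ex_series u /\ Series u <= K / (1 - q).
Proof.
  intros Hq Hu.
  assert (Hgeom : is_series (fun k => K * q ^ k) (K / (1 - q))).
  { apply (is_series_scal_l K (fun k => q ^ k) (/ (1 - q))).
    apply is_series_geom. rewrite Rabs_pos_eq; lra. }
  assert (Hex : ex_series u).
  { apply (ex_series_le u (fun k => K * q ^ k)); [|eexists; exact Hgeom].
    intro k. change (norm (u k)) with (Rabs (u k)). rewrite Rabs_pos_eq; apply Hu. }
  split; [exact Hex|].
  rewrite <- (is_series_unique _ _ Hgeom).
  apply Series_le; [exact Hu|eexists; exact Hgeom].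
Qed.

Lemma sum_f_R0_le_Series (u : nat -> R) :
  (forall k, 0 <= u k) -> ex_series u -> forall N, sum_f_R0 u N <= Series u.
Proof.
  intros Hu Hex N. rewrite <- sum_n_Reals.
  apply is_lim_seq_incr_compare; [exact (Series_correct _ Hex)|].
  intro n. rewrite !sum_n_Reals. simpl. specialize (Hu (S n)). lra.
Qed.

Lemma Series_le_of_sum_f_R0 (u : nat -> R) (L : R) :
  ex_series u -> (forall N, sum_f_R0 u N <= L) -> Series u <= L.
Proof.
  intros Hex H.
  apply (is_lim_seq_le (sum_n u) (fun _ => L) (Series u) L).
  - intro n. rewrite sum_n_Reals. apply H.
  - exact (Series_correct _ Hex).
  - apply is_lim_seq_const.
Qed.

Lemma term_le_Series (u : nat -> R) :
  (forall k, 0 <= u k) -> ex_series u -> forall k, u k <= Series u.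
Proof.
  intros Hu Hex k. eapply Rle_trans; [|apply (sum_f_R0_le_Series u Hu Hex k)].
  destruct k as [|k]; simpl; [lra|].
  assert (0 <= sum_f_R0 u k) by (apply cond_pos_sum; exact Hu). lra.
Qed.

Lemma Rle_pow_le_1 (x : R) (m n : nat) :
  0 <= x <= 1 -> (m <= n)%nat -> x ^ n <= x ^ m.
Proof.
  intros Hx Hmn. induction Hmn as [|n _ IH]; [lra|].
  simpl. assert (0 <= x ^ n) by (apply pow_le; lra). nra.
Qed.

Lemma succ_mul_pow_sub_le_1 (t : R) (k : nat) :
  0 <= t <= 1 -> INR (S k) * t ^ k - INR k * t ^ S k <= 1.
Proof.
  intros Ht. induction k as [|k IH]; [simpl; lra|].
  (* Consecutive values of the left-hand side differ by [-(k+1) t^k (1-t)^2]. *)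
  rewrite !S_INR in *. simpl pow in *.
  assert (0 <= t ^ k) by (apply pow_le; lra).
  assert (0 <= INR k) by apply pos_INR.
  assert (0 <= (INR k + 1) * t ^ k * ((1 - t) * (1 - t))).
  { apply Rmult_le_pos; [apply Rmult_le_pos; lra|nra]. }
  nra.
Qed.

Lemma succ_mul_pow_le_inv (t : R) (k : nat) :
  0 <= t < 1 -> INR (S k) * t ^ k <= / (1 - t).
Proof.
  intros Ht.
  assert (H := succ_mul_pow_sub_le_1 t k ltac:(lra)).
  assert (0 <= t ^ S k) by (apply pow_le; lra).
  rewrite S_INR in *. simpl pow in *.
  apply (Rmult_le_reg_r (1 - t)); [lra|].
  rewrite Rinv_l by lra. nra.
Qed.

Lemma succ_mul_pow_le_geom (x r rho : R) (k : nat) :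
  0 <= x <= r -> r < rho -> INR (S k) * x ^ k <= / (1 - r / rho) * rho ^ k.
Proof.
  intros Hx Hr.
  assert (Hrho : (r / rho) * rho = r) by (field; lra).
  assert (Ht : 0 <= r / rho < 1).
  { split; [apply Rdiv_le_0_compat; lra|].
    apply (Rmult_lt_reg_r rho); lra. }
  assert (0 <= INR (S k)) by apply pos_INR.
  apply Rle_trans with (INR (S k) * r ^ k).
  - apply Rmult_le_compat_l; [lra|apply pow_incr; lra].
  - rewrite <- Hrho at 1. rewrite Rpow_mult_distr, <- Rmult_assoc.
    apply Rmult_le_compat_r; [apply pow_le; lra|].
    exact (succ_mul_pow_le_inv _ k Ht).
Qed.

Lemma pow_S_sub_le (x y : R) (k : nat) :
  0 <= y <= x -> x ^ S k - y ^ S k <= (x - y) * (INR (S k) * x ^ k).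
Proof.
  intros H. induction k as [|k IH]; [simpl; lra|].
  rewrite !S_INR in *. simpl pow in *.
  assert (0 <= y ^ k) by (apply pow_le; lra).
  assert (y ^ k <= x ^ k) by (apply pow_incr; lra).
  assert (0 <= INR k) by apply pos_INR.
  assert (y * y ^ k <= x * x ^ k) by (apply Rmult_le_compat; lra).
  assert (x * (x * x ^ k - y * y ^ k) <= x * ((x - y) * ((INR k + 1) * x ^ k)))
    by (apply Rmult_le_compat_l; lra).
  assert ((x - y) * (y * y ^ k) <= (x - y) * (x * x ^ k))
    by (apply Rmult_le_compat_l; lra).
  nra.
Qed.

Definition pser (c : nat -> nat) (x : R) : R :=
  Series (fun k => INR (c k) * x ^ S k).

Definition pser_deriv (c : nat -> nat) (x : R) : R :=
  Series (fun k => INR (S k) * INR (c k) * x ^ k).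

(* Dominating [(k+1) r^k] by [(1 + r) / (1 - r) * ((1 + r) / 2)^k] and summing
   gives this bound on the derivative series; it also serves as Lipschitz constant. *)
Definition deriv_const (D r : R) : R := 2 * D * (1 + r) / (1 - r) ^ 2.

Section Bounded_coefficients.

Variables (c : nat -> nat) (D r : R).
Hypothesis c_le : forall k, INR (c k) <= D.
Hypothesis r_lt_1 : r < 1.

Lemma coef_bound_nonneg : 0 <= D.
Proof. eapply Rle_trans; [apply (pos_INR (c 0))|apply c_le]. Qed.

Lemma pser_term_bound (x : R) (k : nat) :
  0 <= x <= r -> 0 <= INR (c k) * x ^ S k <= D * x * r ^ k.
Proof.
  intros Hx. assert (Hc := c_le k). assert (Hc0 := pos_INR (c k)).
  assert (0 <= x ^ k <= r ^ k) by (split; [apply pow_le|apply pow_incr]; lra).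
  simpl pow. split; [apply Rmult_le_pos; nra|].
  replace (D * x * r ^ k) with (D * (x * r ^ k)) by ring.
  apply Rmult_le_compat; nra.
Qed.

Lemma pser_geom (x : R) :
  0 <= x <= r -> ex_series (fun k => INR (c k) * x ^ S k) /\ pser c x <= D * x / (1 - r).
Proof. intros Hx. apply Series_le_geom; [lra|now intro; apply pser_term_bound]. Qed.

Lemma pser_nonneg (x : R) : 0 <= x <= r -> 0 <= pser c x.
Proof.
  intros Hx. eapply Rle_trans; [apply (pser_term_bound x 0 Hx)|].
  apply (term_le_Series (fun k => INR (c k) * x ^ S k));
    [now intro; apply pser_term_bound|apply pser_geom, Hx].
Qed.

Lemma pow_S_le_pser (x : R) (k : nat) :
  0 <= x <= r -> c k <> 0%nat -> x ^ S k <= pser c x.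
Proof.
  intros Hx Hck.
  assert (Hk := term_le_Series (fun k => INR (c k) * x ^ S k)
    (fun k => proj1 (pser_term_bound x k Hx)) (proj1 (pser_geom x Hx)) k).
  cbv beta in Hk. unfold pser.
  assert (1 <= INR (c k)) by (apply (le_INR 1); lia).
  assert (0 <= x ^ S k) by (apply pow_le; lra). nra.
Qed.

Lemma pser_le_pser (x y : R) : 0 <= x <= y -> y <= r -> pser c x <= pser c y.
Proof.
  intros Hxy Hy. apply Series_le; [|apply pser_geom; lra].
  intro k. split; [apply (pser_term_bound x k); lra|].
  apply Rmult_le_compat_l; [apply pos_INR|apply pow_incr; lra].
Qed.

Lemma pser_deriv_term_bound (x : R) (k : nat) :
  0 <= x <= r ->
  0 <= INR (S k) * INR (c k) * x ^ k <= D * ((1 + r) / (1 - r)) * ((1 + r) / 2) ^ k.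
Proof.
  intros Hx. assert (Hc := c_le k). assert (Hc0 := pos_INR (c k)).
  assert (Hw := succ_mul_pow_le_geom x r ((1 + r) / 2) k Hx ltac:(lra)).
  replace (/ (1 - r / ((1 + r) / 2))) with ((1 + r) / (1 - r)) in Hw by (field; lra).
  assert (0 <= INR (S k) * x ^ k) by (apply Rmult_le_pos; [apply pos_INR|apply pow_le; lra]).
  replace (INR (S k) * INR (c k) * x ^ k) with (INR (c k) * (INR (S k) * x ^ k)) by ring.
  rewrite Rmult_assoc.
  split; [apply Rmult_le_pos|apply Rmult_le_compat]; lra.
Qed.

Lemma ex_series_pser_deriv (x : R) :
  0 <= x <= r -> ex_series (fun k => INR (S k) * INR (c k) * x ^ k).
Proof.
  intros Hx. apply (Series_le_geom _ (D * ((1 + r) / (1 - r))) ((1 + r) / 2)); [lra|].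
  now intro; apply pser_deriv_term_bound.
Qed.

Lemma pser_le_pser_deriv (x : R) : 0 <= x <= r -> pser c x <= pser_deriv c x.
Proof.
  intros Hx. apply Series_le; [|apply ex_series_pser_deriv, Hx].
  intro k. split; [apply (pser_term_bound x k Hx)|].
  assert (1 <= INR (S k)) by (apply (le_INR 1); lia).
  assert (0 <= x ^ k) by (apply pow_le; lra).
  assert (Hc0 := pos_INR (c k)).
  simpl pow. replace (INR (S k) * INR (c k) * x ^ k) with (INR (c k) * (INR (S k) * x ^ k)) by ring.
  apply Rmult_le_compat_l; nra.
Qed.

Lemma pser_deriv_le_tail (x : R) (N : nat) :
  0 <= x <= r -> (forall k, (k < N)%nat -> c k = 0%nat) ->
  pser_deriv c x <= deriv_const D r * ((1 + r) / 2) ^ N.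
Proof.
  intros Hx Hzero. unfold pser_deriv.
  set (u := fun k => INR (S k) * INR (c k) * x ^ k).
  assert (Htail : forall k, 0 <= u (N + k)%nat
                    <= (D * ((1 + r) / (1 - r)) * ((1 + r) / 2) ^ N) * ((1 + r) / 2) ^ k).
  { intro k. rewrite Rmult_assoc, <- pow_add. apply pser_deriv_term_bound, Hx. }
  destruct (Series_le_geom _ _ ((1 + r) / 2) ltac:(lra) Htail) as [_ Hsum].
  replace (deriv_const D r * ((1 + r) / 2) ^ N)
    with (D * ((1 + r) / (1 - r)) * ((1 + r) / 2) ^ N / (1 - (1 + r) / 2))
    by (unfold deriv_const; field; lra).
  destruct N as [|N].
  - eapply Rle_trans; [|exact Hsum]. right. apply Series_ext. reflexivity.
  - rewrite (Series_incr_n u (S N)) by (lia || apply ex_series_pser_deriv, Hx).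
    rewrite sum_eq_R0; [simpl pred; lra|].
    intros k Hk. unfold u. rewrite Hzero by lia. simpl INR. ring.
Qed.

Lemma pser_lipschitz (x y : R) :
  0 <= y <= x -> x <= r -> pser c x <= pser c y + deriv_const D r * (x - y).
Proof.
  intros Hxy Hx.
  set (rho := (1 + r) / 2).
  set (w := fun k => (D * ((1 + r) / (1 - r)) * (x - y)) * rho ^ k).
  assert (HD := coef_bound_nonneg).
  assert (Hw : forall k, 0 <= w k <= (D * ((1 + r) / (1 - r)) * (x - y)) * rho ^ k).
  { intro k. assert (0 <= rho ^ k) by (apply pow_le; unfold rho; lra).
    assert (0 <= (1 + r) / (1 - r)) by (apply Rdiv_le_0_compat; lra).
    unfold w. split; [apply Rmult_le_pos; [apply Rmult_le_pos; [apply Rmult_le_pos|]|]|]; lra. }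
  destruct (Series_le_geom w _ rho ltac:(unfold rho; lra) Hw) as [Hexw Hsumw].
  destruct (pser_geom y ltac:(lra)) as [Hexy _].
  assert (Hsum : pser c y + Series w <= pser c y + deriv_const D r * (x - y)).
  { apply Rplus_le_compat_l. eapply Rle_trans; [exact Hsumw|].
    right. unfold rho, deriv_const. field. lra. }
  eapply Rle_trans; [|exact Hsum]. unfold pser. rewrite <- Series_plus by assumption.
  apply Series_le; [|exact (ex_series_plus _ _ Hexy Hexw)].
  intro k. split; [apply (pser_term_bound x k); lra|].
  assert (Hd := pow_S_sub_le x y k ltac:(lra)).
  assert (Hb := pser_deriv_term_bound x k ltac:(lra)).
  assert (Hc0 := pos_INR (c k)).
  assert (0 <= INR (c k) * (x ^ S k - y ^ S k) <= INR (c k) * ((x - y) * (INR (S k) * x ^ k))).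
  { assert (y ^ S k <= x ^ S k) by (apply pow_incr; lra).
    split; [apply Rmult_le_pos|apply Rmult_le_compat_l]; lra. }
  unfold w. fold rho in Hb. nra.
Qed.

Lemma pser_le_of_le_add (x y e : R) :
  0 <= x <= r -> 0 <= y <= r -> 0 <= e -> x <= y + e ->
  pser c x <= pser c y + deriv_const D r * e.
Proof.
  intros Hx Hy He Hxy.
  assert (HD := coef_bound_nonneg).
  assert (HL : 0 <= deriv_const D r).
  { unfold deriv_const. apply Rdiv_le_0_compat; [|apply pow_lt]; nra. }
  destruct (Rle_or_lt x y) as [Hle|Hlt].
  - assert (pser c x <= pser c y) by (apply pser_le_pser; lra).
    assert (0 <= deriv_const D r * e) by (apply Rmult_le_pos; lra). lra.
  - assert (H := pser_lipschitz x y ltac:(lra) (proj2 Hx)).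
    assert (deriv_const D r * (x - y) <= deriv_const D r * e)
      by (apply Rmult_le_compat_l; lra). lra.
Qed.

Lemma lt_of_half_lt_pser (x : R) :
  0 <= x <= r -> 1 / 2 < pser c x -> 0 < (1 - r) / (2 * D) < x.
Proof.
  intros Hx Hhalf. destruct (pser_geom x Hx) as [_ Hle].
  assert (Hpos : 1 / 2 < D * x / (1 - r)) by lra.
  assert (HDx : 0 < D * x).
  { apply Rnot_le_lt. intro HDx. assert (D * x / (1 - r) <= 0); [|lra].
    apply Rmult_le_0_r; [lra|left; apply Rinv_0_lt_compat; lra]. }
  assert (HD : 0 < D) by (destruct (Rle_or_lt D 0); [nra|assumption]).
  split; [apply Rdiv_lt_0_compat; lra|].
  apply (Rmult_lt_reg_l (2 * D)); [lra|].
  replace (2 * D * ((1 - r) / (2 * D))) with (1 - r) by (field; lra).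
  apply (Rmult_lt_reg_r (/ (1 - r))); [apply Rinv_0_lt_compat; lra|].
  rewrite Rinv_r by lra. unfold Rdiv in Hpos. lra.
Qed.

Lemma coef_eq0_of_pser_lt_pow (x : R) (N : nat) :
  0 <= x <= r -> pser c x < x ^ S N -> forall k, (k < N)%nat -> c k = 0%nat.
Proof.
  intros Hx Hsmall k Hk. destruct (Nat.eq_dec (c k) 0) as [|Hck]; [assumption|exfalso].
  assert (H1 := pow_S_le_pser x k Hx Hck).
  assert (H2 : x ^ S N <= x ^ S k) by (apply Rle_pow_le_1; [lra|lia]).
  lra.
Qed.

End Bounded_coefficients.

Lemma INR_Int_part (r : R) : 0 <= r -> INR (Z.to_nat (Int_part r)) = IZR (Int_part r).
Proof.
  intros Hr. destruct (base_Int_part r) as [H1 H2].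
  assert (Hz : (-1 < Int_part r)%Z) by (apply lt_IZR; lra).
  rewrite INR_IZR_INZ, Z2Nat.id by lia. reflexivity.
Qed.

Lemma S_plus_le_beta (beta : R) (s : nat -> nat) (k : nat) :
  1 < beta -> S_plus beta s -> INR (s k) <= beta.
Proof.
  intros Hb [Hs _]. apply Rle_trans with (INR (Z.to_nat (Int_part beta))).
  - apply le_INR, Hs.
  - rewrite INR_Int_part by lra. apply base_Int_part.
Qed.

Lemma iter_fbeta_nonneg (beta x : R) (k : nat) :
  0 <= x -> 0 <= Nat.iter k (fbeta beta) x.
Proof.
  intros Hx. destruct k as [|k]; [exact Hx|].
  change (0 <= fbeta beta (Nat.iter k (fbeta beta) x)).
  generalize (Nat.iter k (fbeta beta) x) as z. intro z.
  unfold fbeta. destruct (base_Int_part (beta * z)). lra.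
Qed.

Lemma fbeta_step (beta z : R) : 1 < beta -> 0 <= z ->
  z = / beta * (INR (Z.to_nat (Int_part (beta * z))) + fbeta beta z).
Proof. intros Hb Hz. rewrite INR_Int_part by nra. unfold fbeta. field. lra. Qed.

Lemma digit_expansion (beta x : R) (N : nat) : 1 < beta -> 0 <= x ->
  x = sum_f_R0 (fun k => INR (digit beta x k) * (/ beta) ^ S k) N
      + (/ beta) ^ S N * Nat.iter (S N) (fbeta beta) x.
Proof.
  intros Hb Hx. induction N as [|N IH].
  - rewrite (fbeta_step beta x) at 1 by assumption. unfold digit. simpl. ring.
  - rewrite IH at 1. simpl sum_f_R0.
    rewrite (fbeta_step beta (Nat.iter (S N) (fbeta beta) x) Hb (iter_fbeta_nonneg _ _ _ Hx)) at 1.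
    unfold digit. simpl. ring.
Qed.

Lemma S_plus_sum_le_1 (beta : R) (s : nat -> nat) (N : nat) :
  1 < beta -> S_plus beta s -> sum_f_R0 (fun k => INR (s k) * (/ beta) ^ S k) N <= 1.
Proof.
  intros Hb [_ Hs]. destruct (Hs (S N)) as [x [Hx Hdigits]].
  rewrite (sum_eq _ (fun k => INR (digit beta x k) * (/ beta) ^ S k))
    by (intros k Hk; rewrite Hdigits by lia; reflexivity).
  assert (H := digit_expansion beta x N Hb (proj1 Hx)).
  assert (0 <= (/ beta) ^ S N * Nat.iter (S N) (fbeta beta) x).
  { apply Rmult_le_pos; [apply pow_le; left; apply Rinv_0_lt_compat; lra|].
    apply iter_fbeta_nonneg. lra. }
  lra.
Qed.

Lemma S_plus_pser_inv_le_1 (beta : R) (s : nat -> nat) :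
  1 < beta -> S_plus beta s -> pser s (/ beta) <= 1.
Proof.
  intros Hb Hs. assert (Hy := Rinv_lt_1 beta Hb).
  apply Series_le_of_sum_f_R0; [|intro N; exact (S_plus_sum_le_1 beta s N Hb Hs)].
  apply (pser_geom s beta (/ beta)); [intro k; exact (S_plus_le_beta beta s k Hb Hs)|lra|lra].
Qed.

Lemma S_plus_pser_le (beta r x e : R) (s : nat -> nat) :
  1 < beta -> S_plus beta s -> / beta <= r < 1 -> 0 <= x <= r -> 0 <= e -> x <= / beta + e ->
  pser s x <= 1 + deriv_const beta r * e.
Proof.
  intros Hb Hs Hr Hx He Hxe. assert (Hy := Rinv_lt_1 beta Hb).
  assert (H := pser_le_of_le_add s beta r (fun k => S_plus_le_beta beta s k Hb Hs) (proj2 Hr)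
                 x (/ beta) e Hx ltac:(lra) He Hxe).
  assert (H1 := S_plus_pser_inv_le_1 beta s Hb Hs). lra.
Qed.

Section Digit_series_difference.

Variables (a b : nat -> nat) (D x : R).
Hypothesis a_le : forall k, INR (a k) <= D.
Hypothesis b_le : forall k, INR (b k) <= D.
Hypothesis x_range : 0 <= x < 1.

Lemma gser_pser : gser a b x = 1 + pser a x - pser b x.
Proof.
  destruct (pser_geom a D x a_le (proj2 x_range) x ltac:(lra)) as [Hexa _].
  destruct (pser_geom b D x b_le (proj2 x_range) x ltac:(lra)) as [Hexb _].
  unfold gser, pser.
  transitivity (1 + Series (fun k => INR (a k) * x ^ S k - INR (b k) * x ^ S k)).
  - f_equal. apply Series_ext. intro k. ring.
  - rewrite (Series_minus _ _ Hexa Hexb). ring.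
Qed.

Lemma is_derive_gser : is_derive (gser a b) x (pser_deriv a x - pser_deriv b x).
Proof.
  set (c := fun k => INR (a k) - INR (b k)).
  assert (Hrad : Rbar_lt (Rabs x) (CV_radius (PS_incr_1 c))).
  { rewrite CV_radius_incr_1.
    assert (Hle : Rbar_le ((1 + x) / 2) (CV_radius c)).
    { apply (proj1 (CV_radius_bounded c)). exists D. intro k.
      assert (Hpow : 0 <= ((1 + x) / 2) ^ k <= 1)
        by (split; [apply pow_le; lra|rewrite <- (pow1 k) at 2; apply pow_incr; lra]).
      assert (Hc : Rabs (c k) <= D).
      { apply Rabs_le. assert (Ha := pos_INR (a k)). assert (Hb := pos_INR (b k)).
        specialize (a_le k). specialize (b_le k). unfold c. lra. }
      rewrite Rabs_mult, (Rabs_pos_eq (_ ^ k)) by lra.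
      assert (0 <= Rabs (c k)) by apply Rabs_pos. nra. }
    rewrite Rabs_pos_eq by lra.
    destruct (CV_radius c) as [l| |]; simpl in *; lra || tauto. }
  apply (is_derive_ext (fun t => 1 + PSeries (PS_incr_1 c) t)).
  { intro t. unfold gser. rewrite PSeries_incr_1. unfold PSeries.
    rewrite <- Series_scal_l. f_equal. apply Series_ext. intro k. simpl. unfold c. ring. }
  replace (pser_deriv a x - pser_deriv b x)
    with (plus zero (PSeries (PS_derive (PS_incr_1 c)) x)).
  - exact (is_derive_plus (fun _ => 1) _ x _ _ (is_derive_const 1 x) (is_derive_PSeries _ _ Hrad)).
  - rewrite plus_zero_l. unfold pser_deriv, PSeries.
    rewrite <- Series_minus
      by (apply (ex_series_pser_deriv _ D x); [assumption|lra|lra]).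
    apply Series_ext. intro k. unfold PS_derive. change (PS_incr_1 c (S k)) with (c k).
    unfold c. ring.
Qed.

End Digit_series_difference.

Lemma Derive_gser_lt (a b : nat -> nat) (D r x eta delta : R) (N : nat) :
  (forall k, INR (a k) <= D) -> (forall k, INR (b k) <= D) ->
  r < 1 -> 0 <= x <= r ->
  deriv_const D r * ((1 + r) / 2) ^ N < 1 / 4 ->
  eta <= ((1 - r) / (2 * D)) ^ S N ->
  pser b x <= 1 + eta / 2 ->
  Rabs (gser a b x) < delta -> delta <= 1 / 4 -> delta <= eta / 2 ->
  ex_derive (gser a b) x /\ Derive (gser a b) x < - delta.
Proof.
  intros Ha Hb Hr Hx Htail Heta HB Hg Hdelta Hdelta'.
  assert (HA := pser_nonneg a D r Ha Hr x Hx).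
  rewrite (gser_pser a b D x Ha Hb ltac:(lra)) in Hg. apply Rabs_def2 in Hg.
  assert (Hm := lt_of_half_lt_pser b D r Hb Hr x Hx ltac:(lra)).
  assert (Hpow : eta <= x ^ S N).
  { eapply Rle_trans; [exact Heta|apply pow_incr; lra]. }
  assert (Hzero := coef_eq0_of_pser_lt_pow a D r Ha Hr x N Hx ltac:(lra)).
  assert (HdA := pser_deriv_le_tail a D r Ha Hr x N Hx Hzero).
  assert (HdB := pser_le_pser_deriv b D r Hb Hr x Hx).
  assert (Hder := is_derive_gser a b D x Ha Hb ltac:(lra)).
  split; [eexists; exact Hder|]. rewrite (is_derive_unique _ _ _ Hder). lra.
Qed.

Theorem lemma5p1 (beta : R) (hbeta : 1 < beta) :
  exists eps delta : R, 0 < eps /\ 0 < delta /\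
    forall a b : nat -> nat, S_plus beta a -> S_plus beta b ->
    forall x : R, 0 <= x <= 1 / beta + eps ->
      Rabs (gser a b x) < delta ->
      ex_derive (gser a b) x /\ Derive (gser a b) x < - delta.
Proof.
  set (y := / beta). set (r := (1 + y) / 2). set (L := deriv_const beta r).
  assert (Hy := Rinv_lt_1 beta hbeta). fold y in Hy.
  assert (HL : 0 < L).
  { unfold L, deriv_const. apply Rdiv_lt_0_compat; [|apply pow_lt]; unfold r; nra. }
  destruct (ex_mul_pow_lt L ((1 + r) / 2) (1 / 4)) as [N HN]; [lra|unfold r; lra|lra|].
  set (eta := ((1 - r) / (2 * beta)) ^ S N).
  assert (Heta : 0 < eta) by (apply pow_lt, Rdiv_lt_0_compat; unfold r; lra).
  set (eps := Rmin ((1 - y) / 2) (eta / (2 * L))).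
  assert (Heps : 0 < eps <= (1 - y) / 2).
  { split; [apply Rmin_pos; [|apply Rdiv_lt_0_compat]|apply Rmin_l]; lra. }
  assert (HLeps : L * eps <= eta / 2).
  { eapply Rle_trans; [apply Rmult_le_compat_l; [lra|apply Rmin_r]|right; field; lra]. }
  exists eps, (Rmin (1 / 4) (eta / 2)).
  split; [lra|split; [apply Rmin_pos; lra|]].
  intros a b Ha Hb x Hx Hg.
  replace (1 / beta) with y in Hx by (unfold y; field; lra).
  assert (HB := S_plus_pser_le beta r x eps b hbeta Hb ltac:(fold y; unfold r; lra)
                  ltac:(unfold r; lra) ltac:(lra) ltac:(fold y; lra)).
  apply (Derive_gser_lt a b beta r x eta _ N (fun k => S_plus_le_beta beta a k hbeta Ha)
           (fun k => S_plus_le_beta beta b k hbeta Hb));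
    [unfold r; lra|unfold r; lra|exact HN|apply Rle_refl|fold L in HB; lra|exact Hg
    |apply Rmin_l|apply Rmin_r].
Qed.
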